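(* Let $0<\alpha<1$, $\lambda\in\mathbb{R}$, $T>0$, integers $N,M\ge 2$, $\tau=T/N$, $h=(b-a)/M$, and grid points $x_i=a+ih$, $0\le i\le M$. Let $\{v_i^n\}$ ($0\le i\le M$, $0\le n\le N$) satisfy $$\mathcal{A}_x\delta_{t}^{\alpha,\lambda} v_i^{n}-\mathcal{A}_t^{\alpha}\delta_{x}^2v_i^{n}=S_i^{n},\quad 1\leq i\leq M-1,\ 1\leq n\leq N,$$ $$v^n_0=0,\quad v^n_M=0,\quad 1\le n\le N,\qquad v^0_i=v_0(x_i),\quad 0\le i\le M,$$ where $v_0(x_0)=v_0(x_M)=0$ and $S_i^n$ are given. If $2-\alpha-e^{\lambda\tau}\ge0$, then for $1<n\le N$, $$\|v^n\|^2\leq \frac{3}{2}e^{2|\lambda|T}\|v^{0}\|^2+\frac{3\Gamma(1-\alpha)T^{\alpha}e^{2|\lambda|T}}{C_{\Omega}} \max_{0\leq n\leq N}\|S^n\|^2,$$ where $\|S^n\|=\sqrt{h\sum_{i=1}^{M-1}(S_i^n)^2}$.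
   Context: $g_k^{\alpha}=(-1)^k\binom{\alpha}{k}$ are the coefficients of $(1-z)^{\alpha}=\sum_{k\ge0}g_k^{\alpha}z^k$ and $g_k^{\alpha,\lambda}=e^{-(k-\frac{\alpha}{2})\lambda\tau}g_k^{\alpha}$. Time operators (applied for each fixed $i$): $\delta_t^{\alpha,\lambda}v_i^n=\tau^{-\alpha}\sum_{k=0}^{n}g_k^{\alpha,\lambda}v_i^{n-k}$ and $\mathcal{A}_t^{\alpha}v_i^n=(1-\frac{\alpha}{2})v_i^n+\frac{\alpha}{2}v_i^{n-1}$. Space operators: $\delta_x^2v_i=h^{-2}(v_{i-1}-2v_i+v_{i+1})$, and $\mathcal{A}_xv_i=\frac{1}{12}(v_{i-1}+10v_i+v_{i+1})$ for $1\le i\le M-1$, $\mathcal{A}_xv_i=v_i$ for $i=0,M$. For grid functions $u,v$ on $\{x_0,\dots,x_M\}$ vanishing at $x_0,x_M$ (the space $V_h$), $(u,v)=h\sum_{i=1}^{M-1}u_iv_i$ and $\|v\|=\sqrt{(v,v)}$. $C_\Omega>0$ is a constant depending only on $\Omega=(a,b)$ (not on $h$) such that $-(\delta_x^2v,v)\ge C_\Omega\|v\|^2$ for all $v\in V_h$ and all mesh sizes $h$. *)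

From Stdlib Require Import Reals Lra Lia List Arith Factorial.
From Coquelicot Require Import Coquelicot.
Open Scope R_scope.

Definition Gamma (s : R) : R :=
  RInt_gen (fun t => Rpower t (s - 1) * exp (- t)) (at_right 0) (Rbar_locally p_infty).

Fixpoint falling (a : R) (k : nat) : R :=
  match k with
  | O => 1
  | S k' => falling a k' * (a - INR k')
  end.

Definition gbinom (a : R) (k : nat) : R := falling a k / INR (Factorial.fact k).

Definition g (alpha : R) (k : nat) : R := (-1) ^ k * gbinom alpha k.

Definition gl (alpha lambda tau : R) (k : nat) : R :=
  exp (- (INR k - alpha / 2) * lambda * tau) * g alpha k.

(* Grid functions are v : nat -> nat -> R, with v n i = v_i^n. *)

Definition dt (alpha lambda tau : R) (v : nat -> nat -> R) (n i : nat) : R :=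
  Rpower tau (- alpha) * sum_n (fun k => gl alpha lambda tau k * v (n - k)%nat i) n.

Definition At (alpha : R) (v : nat -> nat -> R) (n i : nat) : R :=
  (1 - alpha / 2) * v n i + alpha / 2 * v (n - 1)%nat i.

Definition d2x (h : R) (w : nat -> R) (i : nat) : R :=
  (w (i - 1)%nat - 2 * w i + w (i + 1)%nat) / (h ^ 2).

Definition Ax (M : nat) (w : nat -> R) (i : nat) : R :=
  if andb (1 <=? i)%nat (i <=? M - 1)%nat
  then (w (i - 1)%nat + 10 * w i + w (i + 1)%nat) / 12
  else w i.

Definition ip (h : R) (M : nat) (u w : nat -> R) : R :=
  h * sum_n_m (fun i => u i * w i) 1 (M - 1).

Definition nrm2 (h : R) (M : nat) (u : nat -> R) : R := ip h M u u.

Definition nrm (h : R) (M : nat) (u : nat -> R) : R := sqrt (nrm2 h M u).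

Definition maxn0 (f : nat -> R) (N : nat) : R :=
  fold_right Rmax (f O) (map f (seq 0 (S N))).

(* Writing u^m = e^(m lambda tau) v^m removes the tempering: the scheme becomes
     tau^(-alpha) e^(alpha lambda tau / 2) A_x sum_k g_k u^(m-k) - delta_x^2 (a u^m + b u^(m-1))
       = e^(m lambda tau) S^m,
   with a = 1 - alpha/2 and b = (alpha/2) e^(lambda tau); the hypothesis
   2 - alpha - e^(lambda tau) >= 0 says exactly that b <= alpha a.  Pairing with
   a u^m + b u^(m-1), and using that (A_x ., .) is a symmetric form between (2/3)||.||^2 and
   ||.||^2, the sign pattern g_0 = 1, g_k <= 0 (k >= 1) yields
     (a + b)/2 sum_k g_k (A_x u^(m-k), u^(m-k)) <= sum_k g_k (A_x u^(m-k), a u^m + b u^(m-1)),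
   and the Poincare constant absorbs the source through Young's inequality.  A convolution
   inequality sum_k g_k y_(m-k) <= D for all m <= n forces y_n <= y_0 + D / sum_(k<=n) g_k, and
   the bounds sum_(k<=n) g_k >= (1 - alpha) n^(-alpha) and
   Gamma(1 - alpha) >= 1 / (2 (1 - alpha) (2 - alpha)) turn this into the stated constant. *)

From Stdlib Require Import Reals Lra Lia List Classical.
From Coquelicot Require Import Coquelicot.
Open Scope R_scope.

Lemma Rpower_gt_0 (x c : R) : 0 < Rpower x c.
Proof. apply exp_pos. Qed.

Lemma Rpower_base_1 (c : R) : Rpower 1 c = 1.
Proof. unfold Rpower. rewrite ln_1, Rmult_0_r. apply exp_0. Qed.

Lemma exp_le_compat (x y : R) : x <= y -> exp x <= exp y.
Proof. intros [H | ->]; [left; now apply exp_increasing | lra]. Qed.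

Lemma is_derive_scal_Rpower (k c x : R) : 0 < x ->
  is_derive (fun t => k * Rpower t c) x (k * (c * Rpower x (c - 1))).
Proof.
  intros Hx. apply is_derive_Reals, derivable_pt_lim_scal.
  now apply derivable_pt_lim_power.
Qed.

Lemma continuous_Rpower (c x : R) : 0 < x -> continuous (fun t => Rpower t c) x.
Proof.
  intros Hx. apply (ex_derive_continuous (fun t => Rpower t c)).
  exists (c * Rpower x (c - 1)). apply is_derive_Reals. now apply derivable_pt_lim_power.
Qed.

Lemma continuous_exp_opp (x : R) : continuous (fun t => exp (- t)) x.
Proof. apply (ex_derive_continuous (fun t => exp (- t))). auto_derive. auto. Qed.

Lemma ex_RInt_pos (f : R -> R) (x y : R) : 0 < x -> 0 < y ->
  (forall z, 0 < z -> continuous f z) -> ex_RInt f x y.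
Proof.
  intros Hx Hy Hc. apply (ex_RInt_continuous (V := R_CompleteNormedModule)).
  intros z Hz. apply Hc. assert (0 < Rmin x y) by now apply Rmin_glb_lt. lra.
Qed.

Lemma RInt_pos_derive (F f : R -> R) (x y : R) : 0 < x -> 0 < y ->
  (forall z, 0 < z -> is_derive F z (f z)) -> (forall z, 0 < z -> continuous f z) ->
  RInt f x y = F y - F x.
Proof.
  intros Hx Hy Hd Hc. assert (0 < Rmin x y) by now apply Rmin_glb_lt.
  apply is_RInt_unique, (is_RInt_derive F f x y).
  - intros z Hz. apply Hd. lra.
  - intros z Hz. apply Hc. lra.
Qed.

Lemma nondecreasing_bounded_lim_p_infty (F : R -> R) (B : R) :
  (forall x y, 0 < x <= y -> F x <= F y) -> (forall x, 0 < x -> F x <= B) ->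
  exists l, filterlim F (Rbar_locally p_infty) (locally l) /\ (forall x, 0 < x -> F x <= l).
Proof.
  intros Hmono Hbound.
  set (E := fun z => exists x, 0 < x /\ z = F x).
  destruct (completeness E) as [l [Hub Hlub]].
  - exists B. intros z [x [Hx ->]]. now apply Hbound.
  - exists (F 1), 1. split; [lra | reflexivity].
  - assert (HF : forall x, 0 < x -> F x <= l) by (intros x Hx; apply Hub; now exists x).
    exists l. split; [|exact HF].
    apply filterlim_locally. intros eps.
    assert (Hx0 : exists x0, 0 < x0 /\ l - eps < F x0).
    { apply not_all_not_ex. intros Hnone.
      assert (Hub' : is_upper_bound E (l - eps)).
      { intros z [x [Hx ->]]. specialize (Hnone x). apply not_and_or in Hnone. lra. }
      specialize (Hlub _ Hub'). destruct eps; simpl in *; lra. }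
    destruct Hx0 as [x0 [Hx0 Hlt]]. exists x0. intros y Hy.
    assert (F x0 <= F y) by (apply Hmono; lra).
    assert (F y <= l) by (apply HF; lra).
    apply Rabs_lt_between'. lra.
Qed.

Lemma nondecreasing_bounded_lim_at_right_0 (F : R -> R) (B : R) :
  (forall x y, 0 < x <= y -> F x <= F y) -> (forall x, 0 < x -> B <= F x) ->
  exists l, filterlim F (at_right 0) (locally l) /\ (forall x, 0 < x -> l <= F x).
Proof.
  intros Hmono Hbound.
  destruct (nondecreasing_bounded_lim_p_infty (fun x => - F (/ x)) (- B)) as [l [Hlim Hle]].
  - intros x y Hxy. apply Ropp_le_contravar, Hmono.
    split; [apply Rinv_0_lt_compat; lra | apply Rinv_le_contravar; lra].
  - intros x Hx. apply Ropp_le_contravar, Hbound, Rinv_0_lt_compat, Hx.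
  - exists (- l). split.
    + assert (Hneg : filterlim (fun y => - (- F (/ y))) (Rbar_locally p_infty) (locally (- l)))
        by exact (filterlim_comp _ _ _ _ Ropp _ _ _ Hlim (filterlim_opp l)).
      apply (filterlim_ext_loc (fun x => - (- F (/ / x)))).
      * exists (mkposreal 1 Rlt_0_1). intros x _ Hx. now rewrite Rinv_inv, Ropp_involutive.
      * exact (filterlim_comp _ _ _ Rinv _ _ _ _ filterlim_Rinv_0_right Hneg).
    + intros x Hx. specialize (Hle (/ x) (Rinv_0_lt_compat _ Hx)). rewrite Rinv_inv in Hle. lra.
Qed.

Lemma sum_n_m_le_loc (u w : nat -> R) (n m : nat) :
  (forall k, (n <= k <= m)%nat -> u k <= w k) -> sum_n_m u n m <= sum_n_m w n m.
Proof.
  intros H.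
  set (cut := fun (f : nat -> R) k => if andb (n <=? k)%nat (k <=? m)%nat then f k else 0).
  assert (Hcut : forall f, sum_n_m f n m = sum_n_m (cut f) n m).
  { intros f. apply sum_n_m_ext_loc. intros k Hk. unfold cut.
    replace (andb _ _) with true; [reflexivity |].
    symmetry. apply Bool.andb_true_iff. split; apply Nat.leb_le; lia. }
  rewrite (Hcut u), (Hcut w). apply sum_n_m_le. intros k. unfold cut.
  destruct (andb _ _) eqn:E; [| lra].
  apply Bool.andb_true_iff in E. destruct E as [E1 E2]. apply Nat.leb_le in E1, E2. auto.
Qed.

Lemma sum_n_m_Rplus (u w : nat -> R) (n m : nat) :
  sum_n_m (fun k => u k + w k) n m = sum_n_m u n m + sum_n_m w n m.
Proof. apply (sum_n_m_plus u w). Qed.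

Lemma sum_n_m_Rmult_l (c : R) (u : nat -> R) (n m : nat) :
  sum_n_m (fun k => c * u k) n m = c * sum_n_m u n m.
Proof. apply (sum_n_m_mult_l c u). Qed.

Lemma sum_n_Rmult_l (c : R) (u : nat -> R) (n : nat) :
  sum_n (fun k => c * u k) n = c * sum_n u n.
Proof. apply (sum_n_mult_l c u). Qed.

Lemma sum_n_m_ext_loc_R (u w : nat -> R) (n m : nat) :
  (forall k, (n <= k <= m)%nat -> u k = w k) -> sum_n_m u n m = sum_n_m w n m.
Proof. apply sum_n_m_ext_loc. Qed.

Lemma sum_n_S_l (f : nat -> R) (n : nat) : sum_n f (S n) = f 0%nat + sum_n_m f 1 (S n).
Proof. unfold sum_n. now rewrite (sum_Sn_m f 0 (S n)) by lia. Qed.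

Lemma sum_n_m_shift_pred (f : nat -> R) (m : nat) :
  sum_n_m (fun i => f (i - 1)%nat) 1 m = sum_n_m f 1 m + f 0%nat - f m :> R.
Proof.
  induction m as [| m IH].
  - rewrite !sum_n_m_zero by lia. change (@zero R_AbelianMonoid) with 0. ring.
  - rewrite !sum_n_Sm by lia. change (@plus R_AbelianMonoid) with Rplus.
    rewrite IH. replace (S m - 1)%nat with m by lia. ring.
Qed.

Lemma fold_right_Rmax_ge (l : list R) (d x : R) : In x l -> x <= fold_right Rmax d l.
Proof.
  induction l as [| y l IH]; simpl; [tauto |]. intros [-> | Hx].
  - apply Rmax_l.
  - eapply Rle_trans; [apply IH, Hx | apply Rmax_r].
Qed.

Lemma maxn0_ge (f : nat -> R) (N m : nat) : (m <= N)%nat -> f m <= maxn0 f N.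
Proof. intros Hm. apply fold_right_Rmax_ge, in_map, in_seq. lia. Qed.

(** * A lower bound for the Gamma function *)

Definition gamma_kernel (s t : R) : R := Rpower t (s - 1) * exp (- t).

Definition gamma_primitive (s x : R) : R := RInt (gamma_kernel s) 1 x.

Lemma ex_RInt_gamma_kernel (s x y : R) : 0 < x -> 0 < y -> ex_RInt (gamma_kernel s) x y.
Proof.
  intros Hx Hy. apply ex_RInt_pos; auto. intros z Hz.
  apply (continuous_mult (fun t => Rpower t (s - 1)) (fun t => exp (- t))).
  - now apply continuous_Rpower.
  - apply continuous_exp_opp.
Qed.

Lemma gamma_primitive_1 (s : R) : gamma_primitive s 1 = 0.
Proof. apply (RInt_point (V := R_CompleteNormedModule)). Qed.

Lemma gamma_primitive_sub (s x y : R) : 0 < x -> 0 < y ->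
  gamma_primitive s y - gamma_primitive s x = RInt (gamma_kernel s) x y.
Proof.
  intros Hx Hy. unfold gamma_primitive.
  rewrite <- (RInt_Chasles (gamma_kernel s) 1 x y) by (apply ex_RInt_gamma_kernel; lra).
  change (plus ?u ?w) with (u + w). ring.
Qed.

Lemma gamma_primitive_le (s x y : R) : 0 < x <= y -> gamma_primitive s x <= gamma_primitive s y.
Proof.
  intros Hxy. cut (0 <= gamma_primitive s y - gamma_primitive s x); [lra|].
  rewrite gamma_primitive_sub by lra. apply RInt_ge_0; [lra | apply ex_RInt_gamma_kernel; lra |].
  intros t Ht. left. apply Rmult_lt_0_compat; [apply Rpower_gt_0 | apply exp_pos].
Qed.

Lemma gamma_primitive_ge (s x : R) : 0 < s -> 0 < x -> - / s <= gamma_primitive s x.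
Proof.
  intros Hs Hx. destruct (Rle_dec x 1) as [Hx1 | Hx1].
  2: { assert (H1 : gamma_primitive s 1 <= gamma_primitive s x)
         by (apply gamma_primitive_le; lra).
       rewrite gamma_primitive_1 in H1. assert (0 < / s) by now apply Rinv_0_lt_compat. lra. }
  assert (Hswap : gamma_primitive s x = - RInt (gamma_kernel s) x 1).
  { unfold gamma_primitive. now rewrite <- opp_RInt_swap by (apply ex_RInt_gamma_kernel; lra). }
  rewrite Hswap. apply Ropp_le_contravar.
  (* e^{-t} <= 1, and t^{s-1} has primitive t^s / s *)
  apply Rle_trans with (RInt (fun t => Rpower t (s - 1)) x 1).
  - apply RInt_le; [lra | apply ex_RInt_gamma_kernel; lra | |].
    + apply ex_RInt_pos; [lra | lra |]. intros; now apply continuous_Rpower.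
    + intros t Ht. unfold gamma_kernel. rewrite <- (Rmult_1_r (Rpower t (s - 1))) at 2.
      apply Rmult_le_compat_l; [left; apply Rpower_gt_0|].
      rewrite <- exp_0. apply exp_le_compat. lra.
  - rewrite (RInt_pos_derive (fun t => / s * Rpower t s)); [| lra | lra | |].
    + rewrite Rpower_base_1. pose proof (Rpower_gt_0 x s).
      assert (0 < / s) by now apply Rinv_0_lt_compat. nra.
    + intros t Ht. replace (Rpower t (s - 1)) with (/ s * (s * Rpower t (s - 1))) by (field; lra).
      now apply is_derive_scal_Rpower.
    + intros; now apply continuous_Rpower.
Qed.

Lemma gamma_primitive_le_1 (s x : R) : s <= 1 -> 0 < x -> gamma_primitive s x <= 1.
Proof.
  intros Hs Hx. destruct (Rle_dec 1 x) as [Hx1 | Hx1].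
  2: { assert (H1 : gamma_primitive s x <= gamma_primitive s 1)
         by (apply gamma_primitive_le; lra).
       rewrite gamma_primitive_1 in H1. lra. }
  unfold gamma_primitive.
  (* t^{s-1} <= 1 for t >= 1 *)
  apply Rle_trans with (RInt (fun t => exp (- t)) 1 x).
  - apply RInt_le; [lra | apply ex_RInt_gamma_kernel; lra | |].
    + apply ex_RInt_pos; [lra | lra |]. intros; apply continuous_exp_opp.
    + intros t Ht. unfold gamma_kernel. rewrite <- (Rmult_1_l (exp (- t))) at 2.
      apply Rmult_le_compat_r; [left; apply exp_pos|].
      apply Rle_trans with (Rpower t 0); [apply Rle_Rpower; lra | rewrite Rpower_O; lra].
  - rewrite (RInt_pos_derive (fun t => - exp (- t))); [| lra | lra | |].
    + pose proof (exp_pos (- x)).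
      assert (exp (- (1)) <= exp 0) by (apply exp_le_compat; lra). rewrite exp_0 in *. lra.
    + intros t Ht. auto_derive; auto. ring.
    + intros; apply continuous_exp_opp.
Qed.

Lemma RInt_gamma_kernel_le_Gamma (s x y : R) : 0 < s <= 1 -> 0 < x <= y ->
  RInt (gamma_kernel s) x y <= Gamma s.
Proof.
  intros Hs Hxy.
  destruct (nondecreasing_bounded_lim_at_right_0 (gamma_primitive s) (- / s))
    as [l0 [Hl0 Hle0]].
  { apply gamma_primitive_le. } { intros; apply gamma_primitive_ge; lra. }
  destruct (nondecreasing_bounded_lim_p_infty (gamma_primitive s) 1) as [l1 [Hl1 Hle1]].
  { apply gamma_primitive_le. } { intros; apply gamma_primitive_le_1; lra. }
  assert (HGamma : Gamma s = l1 - l0).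
  { apply is_RInt_gen_unique.
    apply (filterlimi_lim_ext_loc
      (fun ab => gamma_primitive s (snd ab) - gamma_primitive s (fst ab))).
    - apply (Filter_prod _ _ _ (fun x => 0 < x) (fun x => 0 < x)).
      + exists (mkposreal 1 Rlt_0_1). auto.
      + exists 0. auto.
      + intros u w Hu Hw. simpl. rewrite gamma_primitive_sub by auto.
        apply (RInt_correct (V := R_CompleteNormedModule)), ex_RInt_gamma_kernel; auto.
    - apply (filterlim_comp_2 (G := locally l1) (H := locally (opp l0))
        (fun ab => gamma_primitive s (snd ab)) (fun ab => opp (gamma_primitive s (fst ab))) plus).
      + exact (filterlim_comp _ _ _ snd _ _ _ _ filterlim_snd Hl1).
      + exact (filterlim_comp _ _ _ _ opp _ _ _
                 (filterlim_comp _ _ _ fst _ _ _ _ filterlim_fst Hl0) (filterlim_opp l0)).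
      + apply (filterlim_plus l1 (opp l0)). }
  rewrite HGamma, <- gamma_primitive_sub by lra.
  specialize (Hle0 x (proj1 Hxy)). specialize (Hle1 y ltac:(lra)). lra.
Qed.

Lemma Gamma_lower_bound (s : R) : 0 < s <= 1 -> 1 / (2 * s * (s + 1)) <= Gamma s.
Proof.
  intros Hs.
  (* integrate over [eps, 1] with eps^s = 1/4, using e^{-t} >= 1 - t *)
  set (eps := Rpower (/ 4) (/ s)).
  assert (Heps_s : Rpower eps s = / 4).
  { unfold eps. rewrite Rpower_mult, Rinv_l by lra. apply Rpower_1. lra. }
  assert (Heps1 : eps <= 1).
  { rewrite <- (Rpower_base_1 (/ s)). apply Rle_Rpower_l; [| lra].
    left. apply Rinv_0_lt_compat. lra. }
  assert (Heps0 : 0 < eps) by apply Rpower_gt_0.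
  assert (Hcont : forall z, 0 < z -> continuous (fun t => Rpower t (s - 1) * (1 - t)) z).
  { intros z Hz. apply (continuous_mult (fun t => Rpower t (s - 1)) (fun t => 1 - t)).
    - now apply continuous_Rpower.
    - apply (ex_derive_continuous (fun t => 1 - t)). auto_derive. auto. }
  apply Rle_trans with (RInt (gamma_kernel s) eps 1);
    [| apply RInt_gamma_kernel_le_Gamma; lra].
  apply Rle_trans with (RInt (fun t => Rpower t (s - 1) * (1 - t)) eps 1).
  - rewrite (RInt_pos_derive (fun t => / s * Rpower t s + - / (s + 1) * Rpower t (s + 1)));
      [| lra | lra | | exact Hcont].
    + rewrite !Rpower_base_1, Heps_s.
      pose proof (Rpower_gt_0 eps (s + 1)).
      apply Rmult_le_reg_r with (4 * s * (s + 1)); [nra |].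
      replace (1 / (2 * s * (s + 1)) * (4 * s * (s + 1))) with 2 by (field; lra).
      match goal with |- _ <= ?r => replace r with (3 - s + 4 * s * Rpower eps (s + 1))
        by (field; lra) end.
      nra.
    + intros t Ht.
      evar (d : R). replace (Rpower t (s - 1) * (1 - t)) with d.
      * apply (is_derive_plus (fun t => / s * Rpower t s)
                              (fun t => - / (s + 1) * Rpower t (s + 1)));
          apply is_derive_scal_Rpower; exact Ht.
      * unfold d. change (plus ?u ?w) with (u + w).
        replace (s + 1 - 1) with ((s - 1) + 1) by ring.
        rewrite (Rpower_plus (s - 1) 1 t), (Rpower_1 t Ht). field. lra.
  - apply RInt_le; [lra | apply ex_RInt_pos; [lra | lra | exact Hcont] |
      apply ex_RInt_gamma_kernel; lra |].
    intros t Ht. apply Rmult_le_compat_l; [left; apply Rpower_gt_0 |].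
    pose proof (exp_ineq1_le (- t)). lra.
Qed.

(** * Grünwald–Letnikov coefficients *)

Lemma g_0 (al : R) : g al 0 = 1.
Proof. unfold g, gbinom. simpl. field. Qed.

Lemma g_S (al : R) (k : nat) : g al (S k) = g al k * (INR k - al) / (INR k + 1).
Proof.
  unfold g, gbinom. change (falling al (S k)) with (falling al k * (al - INR k)).
  change (Factorial.fact (S k)) with (S k * Factorial.fact k)%nat.
  rewrite mult_INR, S_INR. change ((-1) ^ S k) with (-1 * (-1) ^ k).
  pose proof (INR_fact_neq_0 k). pose proof (pos_INR k).
  field. lra.
Qed.

Lemma g_1 (al : R) : g al 1 = - al.
Proof. rewrite g_S, g_0. simpl. field. Qed.

Definition gsum (al : R) (n : nat) : R := sum_n (g al) n.

Lemma gsum_closed_form (al : R) (n : nat) : 0 < al -> gsum al n = - (INR n + 1) * g al (S n) / al.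
Proof.
  intros Hal. induction n as [| n IH].
  - unfold gsum. rewrite sum_O, g_S, g_0. simpl. field. lra.
  - unfold gsum in *. rewrite sum_Sn. change (plus ?u ?w) with (u + w).
    rewrite IH, (g_S al (S n)), S_INR. pose proof (pos_INR n). field. lra.
Qed.

Lemma gsum_S (al : R) (n : nat) : 0 < al ->
  gsum al (S n) = gsum al n * (INR n + 1 - al) / (INR n + 1).
Proof.
  intros Hal. rewrite !gsum_closed_form, (g_S al (S n)), !S_INR by exact Hal.
  pose proof (pos_INR n). field. lra.
Qed.

Section GrunwaldCoefficients.

Variable al : R.
Hypothesis Hal : 0 < al < 1.

Lemma gsum_gt_0 (n : nat) : 0 < gsum al n.
Proof.
  induction n as [| n IH].
  - unfold gsum. rewrite sum_O, g_0. lra.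
  - rewrite gsum_S by lra. pose proof (pos_INR n).
    apply Rdiv_lt_0_compat; [apply Rmult_lt_0_compat |]; lra.
Qed.

Lemma gsum_le_S (n : nat) : gsum al (S n) <= gsum al n.
Proof.
  rewrite gsum_S by lra. pose proof (pos_INR n). pose proof (gsum_gt_0 n).
  apply Rmult_le_reg_r with (INR n + 1); [lra |].
  unfold Rdiv. rewrite Rmult_assoc, Rinv_l by lra. nra.
Qed.

Lemma gsum_antimono (m n : nat) : (m <= n)%nat -> gsum al n <= gsum al m.
Proof.
  induction 1 as [| n _ IH]; [lra |]. eapply Rle_trans; [apply gsum_le_S | exact IH].
Qed.

Lemma g_le_0 (k : nat) : (1 <= k)%nat -> g al k <= 0.
Proof.
  intros Hk. destruct k as [| k]; [lia |].
  assert (Hg : g al (S k) = - al * gsum al k / (INR k + 1)).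
  { rewrite gsum_closed_form by lra. pose proof (pos_INR k). field. lra. }
  rewrite Hg. pose proof (gsum_gt_0 k). pose proof (pos_INR k).
  apply Rmult_le_reg_r with (INR k + 1); [lra |].
  unfold Rdiv. rewrite Rmult_assoc, Rinv_l by lra. nra.
Qed.

Lemma Rpower_le_bernoulli (y : R) : 0 < y -> Rpower y al <= 1 + al * (y - 1).
Proof.
  (* concavity of exp (al * ln y) in al, via exp x >= 1 + x at both endpoints *)
  intros Hy. unfold Rpower. set (L := ln y). set (E := exp (al * L)).
  assert (Hy' : exp L = y) by (apply exp_ln; exact Hy).
  assert (HE : 0 < E) by apply exp_pos.
  assert (H1 : exp L = E * exp ((1 - al) * L)) by (unfold E; rewrite <- exp_plus; f_equal; ring).
  assert (H2 : 1 = E * exp (- (al * L))).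
  { unfold E. rewrite <- exp_plus, <- exp_0. f_equal. ring. }
  pose proof (exp_ineq1_le ((1 - al) * L)). pose proof (exp_ineq1_le (- (al * L))).
  assert (E * (1 + (1 - al) * L) <= exp L) by (rewrite H1; apply Rmult_le_compat_l; lra).
  assert (E * (1 + - (al * L)) <= 1) by (rewrite H2 at 2; apply Rmult_le_compat_l; lra).
  rewrite <- Hy'. fold E. nra.
Qed.

Lemma gsum_lower_bound (n : nat) : (1 <= n)%nat -> 1 - al <= gsum al n * Rpower (INR n) al.
Proof.
  induction n as [| n IH]; intros Hn; [lia |].
  destruct n as [| n].
  - unfold gsum. rewrite sum_Sn, sum_O, g_0, g_1. simpl. rewrite Rpower_base_1.
    change (plus ?u ?w) with (u + w). lra.
  - specialize (IH ltac:(lia)). rewrite gsum_S by lra.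
    set (m := INR (S n)). fold m in IH.
    assert (Hm : 1 <= m) by (unfold m; rewrite S_INR; pose proof (pos_INR n); lra).
    replace (INR (S (S n))) with (m + 1) by (unfold m; rewrite (S_INR (S n)); ring).
    (* m^al = (m+1)^al (m/(m+1))^al, and Bernoulli bounds the last factor *)
    set (y := m / (m + 1)).
    assert (Hy : 0 < y) by (unfold y; apply Rdiv_lt_0_compat; lra).
    assert (Hsplit : Rpower m al = Rpower (m + 1) al * Rpower y al).
    { rewrite Rpower_mult_distr by lra. f_equal. unfold y. field. lra. }
    pose proof (Rpower_le_bernoulli y Hy).
    pose proof (gsum_gt_0 (S n)). pose proof (Rpower_gt_0 (m + 1) al).
    rewrite Hsplit in IH.
    replace (gsum al (S n) * (m + 1 - al) / (m + 1) * Rpower (m + 1) al)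
      with (gsum al (S n) * Rpower (m + 1) al * (1 + al * (y - 1))) by (unfold y; field; lra).
    eapply Rle_trans; [exact IH |]. rewrite <- Rmult_assoc.
    apply Rmult_le_compat_l; [| assumption]. apply Rmult_le_pos; lra.
Qed.

Lemma Rpower_div_gsum_le (tau : R) (n : nat) : 0 < tau -> (1 <= n)%nat ->
  Rpower tau al / gsum al n <= Rpower (INR n * tau) al / (1 - al).
Proof.
  intros Htau Hn.
  assert (Hn0 : 0 < INR n) by (apply lt_0_INR; lia).
  pose proof (gsum_lower_bound n Hn). pose proof (gsum_gt_0 n).
  pose proof (Rpower_gt_0 tau al). pose proof (Rpower_gt_0 (INR n) al).
  rewrite <- Rpower_mult_distr by lra.
  apply Rmult_le_reg_r with (gsum al n * (1 - al)); [nra |].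
  replace (Rpower tau al / gsum al n * (gsum al n * (1 - al))) with (Rpower tau al * (1 - al))
    by (field; lra).
  replace (Rpower (INR n) al * Rpower tau al / (1 - al) * (gsum al n * (1 - al)))
    with (Rpower tau al * (gsum al n * Rpower (INR n) al)) by (field; lra).
  apply Rmult_le_compat_l; lra.
Qed.

Lemma gsum_convolution_bound (c B : R) (y : nat -> R) (n : nat) :
  0 < c -> 0 <= B -> 0 <= y 0%nat ->
  (forall m, (1 <= m <= n)%nat -> c * sum_n (fun k => g al k * y (m - k)%nat) m <= B) ->
  y n <= y 0%nat + B / (c * gsum al n).
Proof.
  intros Hc HB Hy0 Hconv.
  assert (Hdiv : forall m, 0 <= B / (c * gsum al m)).
  { intros m. apply Rdiv_le_0_compat; [exact HB |]. apply Rmult_lt_0_compat; [exact Hc |].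
    now apply gsum_gt_0. }
  cut (forall m, (m <= n)%nat -> y m <= y 0%nat + B / (c * gsum al m)); [auto |].
  intros m. induction m as [m IH] using Wf_nat.lt_wf_ind. intros Hm.
  destruct m as [| m]; [specialize (Hdiv 0%nat); lra |].
  set (s := gsum al (S m)). assert (Hs : 0 < s) by now apply gsum_gt_0.
  set (Z := y 0%nat + B / (c * s)).
  (* every earlier value is below Z, and the g_k, k >= 1, are nonpositive *)
  assert (Hlow : Z * (s - 1) <= sum_n_m (fun k => g al k * y (S m - k)%nat) 1 (S m)).
  { assert (Hs1 : s = 1 + sum_n_m (g al) 1 (S m))
      by (unfold s, gsum; rewrite sum_n_S_l, g_0; reflexivity).
    replace (s - 1) with (sum_n_m (g al) 1 (S m)) by lra.
    rewrite <- sum_n_m_Rmult_l. apply sum_n_m_le_loc. intros k Hk.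
    assert (Hyk : y (S m - k)%nat <= y 0%nat + B / (c * gsum al (S m - k))) by (apply IH; lia).
    assert (B / (c * gsum al (S m - k)) <= B / (c * s)).
    { apply Rmult_le_compat_l; [exact HB |]. apply Rinv_le_contravar.
      - apply Rmult_lt_0_compat; lra.
      - apply Rmult_le_compat_l; [lra |]. apply gsum_antimono. lia. }
    pose proof (g_le_0 k ltac:(lia)). unfold Z. nra. }
  specialize (Hconv (S m) ltac:(lia)). rewrite sum_n_S_l, g_0, Nat.sub_0_r in Hconv.
  change (@plus R_AbelianMonoid) with Rplus in Hconv.
  assert (Hcs : c * s * Z = c * s * y 0%nat + B) by (unfold Z; field; lra).
  fold s Z.
  assert (c * (Z * (s - 1)) <= c * sum_n_m (fun k => g al k * y (S m - k)%nat) 1 (S m))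
    by (apply Rmult_le_compat_l; lra).
  assert (0 <= c * s * y 0%nat) by (apply Rmult_le_pos; [apply Rmult_le_pos |]; lra).
  apply Rmult_le_reg_l with c; [exact Hc |]. nra.
Qed.

End GrunwaldCoefficients.

Lemma convolution_energy_ineq (al a b : R) (c : nat -> R) (G : nat -> nat -> R) (n : nat) :
  0 < al -> (1 <= n)%nat -> 0 <= a -> 0 <= b -> b <= al * a ->
  c 0%nat = 1 -> c 1%nat = - al -> (forall k, (1 <= k)%nat -> c k <= 0) -> 0 <= sum_n c n ->
  (forall p q, (p <= n)%nat -> (q <= n)%nat -> G p q = G q p) ->
  (forall p q, (p <= n)%nat -> (q <= n)%nat -> 2 * G p q <= G p p + G q q) ->
  (forall p, (p <= n)%nat -> 0 <= G p p) ->
  (a + b) / 2 * sum_n (fun k => c k * G (n - k)%nat (n - k)%nat) n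
  <= sum_n (fun k => c k * (a * G (n - k)%nat n + b * G (n - k)%nat (n - 1)%nat)) n.
Proof.
  intros Hal Hn Ha Hb Hba Hc0 Hc1 Hneg Hsum Hsym HCS Hpos.
  destruct n as [| m]; [lia |].
  assert (Hsplit : forall f : nat -> R, sum_n f (S m) = f 0%nat + (f 1%nat + sum_n_m f 2 (S m))).
  { intros f. rewrite sum_n_S_l. now rewrite (sum_Sn_m f 1 (S m)) by lia. }
  rewrite !Hsplit. rewrite Hsplit in Hsum. rewrite Hc0, Hc1 in *.
  rewrite Nat.sub_0_r. replace (S m - 1)%nat with m by lia. rewrite (Hsym (S m) m) by lia.
  change (@plus R_AbelianMonoid) with Rplus in *.
  set (P := sum_n_m c 2 (S m)) in *.
  set (Gn := G (S m) (S m)). set (G1 := G m m). set (X := G m (S m)).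
  (* the k >= 2 terms: c k <= 0 and the Cauchy-Schwarz bounds on G *)
  assert (Htail : sum_n_m (fun k => (a + b) / 2 * (c k * G (S m - k)%nat (S m - k)%nat)
                                    + (a / 2 * Gn + b / 2 * G1) * c k) 2 (S m)
     <= sum_n_m (fun k => c k * (a * G (S m - k)%nat (S m) + b * G (S m - k)%nat m)) 2 (S m)).
  { apply sum_n_m_le_loc. intros k Hk.
    assert (Hck : c k <= 0) by (apply Hneg; lia).
    set (Gk := G (S m - k)%nat (S m - k)%nat).
    assert (2 * G (S m - k)%nat (S m) <= Gk + Gn) by (apply HCS; lia).
    assert (2 * G (S m - k)%nat m <= Gk + G1) by (apply HCS; lia).
    assert (0 <= (- c k * a) * (Gk + Gn - 2 * G (S m - k)%nat (S m))) by (apply Rmult_le_pos; nra).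
    assert (0 <= (- c k * b) * (Gk + G1 - 2 * G (S m - k)%nat m)) by (apply Rmult_le_pos; nra).
    nra. }
  rewrite sum_n_m_Rplus, !sum_n_m_Rmult_l in Htail. fold P in Htail.
  assert (0 <= Gn) by (apply Hpos; lia). assert (0 <= G1) by (apply Hpos; lia).
  assert (2 * X <= G1 + Gn) by (apply HCS; lia).
  assert (0 <= (al * a - b) * (Gn + G1 - 2 * X)) by (apply Rmult_le_pos; lra).
  assert (0 <= a * Gn * (1 + (- al + P))) by (apply Rmult_le_pos; [apply Rmult_le_pos |]; lra).
  assert (0 <= b * G1 * (1 + (- al + P))) by (apply Rmult_le_pos; [apply Rmult_le_pos |]; lra).
  nra.
Qed.

(** * The operator A_x and its bilinear form *)

Definition shift_sum (M : nat) (x y : nat -> R) : R :=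
  sum_n_m (fun i => x i * y (i + 1)%nat) 1 (M - 1).

(* (A_x x, y) for grid functions vanishing at both ends (see [ip_Ax]), in symmetric form *)
Definition ax_form (h : R) (M : nat) (x y : nat -> R) : R :=
  5 / 6 * ip h M x y + h / 12 * (shift_sum M x y + shift_sum M y x).

Section GridFunctions.

Variables (h : R) (M : nat).

Lemma ip_ext (x x' y y' : nat -> R) :
  (forall i, (1 <= i <= M - 1)%nat -> x i = x' i) ->
  (forall i, (1 <= i <= M - 1)%nat -> y i = y' i) -> ip h M x y = ip h M x' y'.
Proof.
  intros Hx Hy. unfold ip. f_equal. apply sum_n_m_ext_loc_R. intros k Hk. now rewrite Hx, Hy.
Qed.

Lemma ip_comm (x y : nat -> R) : ip h M x y = ip h M y x.
Proof. unfold ip. f_equal. apply sum_n_m_ext. intros; apply Rmult_comm. Qed.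

Lemma ip_linear_l (x y z : nat -> R) (c d : R) :
  ip h M (fun i => c * y i + d * z i) x = c * ip h M y x + d * ip h M z x.
Proof.
  unfold ip. rewrite (sum_n_m_ext _ (fun i => c * (y i * x i) + d * (z i * x i)))
    by (intros; simpl; ring).
  rewrite sum_n_m_Rplus, !sum_n_m_Rmult_l. ring.
Qed.

Lemma ip_linear_r (x y z : nat -> R) (c d : R) :
  ip h M x (fun i => c * y i + d * z i) = c * ip h M x y + d * ip h M x z.
Proof. rewrite ip_comm, ip_linear_l, (ip_comm y), (ip_comm z). reflexivity. Qed.

Lemma ip_sum_l (c : nat -> R) (X : nat -> nat -> R) (y : nat -> R) (n : nat) :
  ip h M (fun i => sum_n (fun k => c k * X k i) n) y = sum_n (fun k => c k * ip h M (X k) y) n.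
Proof.
  induction n as [| n IH].
  - rewrite sum_O. rewrite (ip_ext _ (fun i => c 0%nat * X 0%nat i + 0 * X 0%nat i) y y).
    + rewrite ip_linear_l. ring.
    + intros; rewrite sum_O; ring.
    + auto.
  - rewrite sum_Sn. change (@plus R_AbelianMonoid) with Rplus. rewrite <- IH.
    rewrite (ip_ext _ (fun i => 1 * sum_n (fun k => c k * X k i) n + c (S n) * X (S n) i) y y).
    + rewrite ip_linear_l. ring.
    + intros; rewrite sum_Sn; change (@plus R_AbelianMonoid) with Rplus; ring.
    + auto.
Qed.

Lemma nrm2_ge_0 (x : nat -> R) : 0 <= h -> 0 <= nrm2 h M x.
Proof.
  intros Hh. unfold nrm2, ip. apply Rmult_le_pos; [exact Hh |].
  apply Rle_trans with (sum_n_m (fun _ => 0) 1 (M - 1)).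
  - rewrite sum_n_m_const. lra.
  - apply sum_n_m_le. intros; apply Rle_0_sqr.
Qed.

Lemma nrm2_scal (c : R) (x : nat -> R) : nrm2 h M (fun i => c * x i) = c * c * nrm2 h M x.
Proof.
  unfold nrm2, ip. rewrite (sum_n_m_ext _ (fun i => c * c * (x i * x i))) by (intros; simpl; ring).
  rewrite sum_n_m_Rmult_l. ring.
Qed.

Lemma ip_le_young (C : R) (x y : nat -> R) : 0 < h -> 0 < C ->
  ip h M x y <= C * nrm2 h M y + nrm2 h M x / (4 * C).
Proof.
  intros Hh HC. unfold nrm2, ip.
  assert (Hsum : sum_n_m (fun i => x i * y i) 1 (M - 1)
    <= C * sum_n_m (fun i => y i * y i) 1 (M - 1)
       + / (4 * C) * sum_n_m (fun i => x i * x i) 1 (M - 1)).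
  { rewrite <- !sum_n_m_Rmult_l, <- sum_n_m_Rplus. apply sum_n_m_le. intros k.
    assert (H : 0 <= (2 * C * y k - x k) ^ 2 / (4 * C))
      by (apply Rdiv_le_0_compat; [apply pow2_ge_0 | lra]).
    replace ((2 * C * y k - x k) ^ 2 / (4 * C))
      with (C * (y k * y k) + / (4 * C) * (x k * x k) - x k * y k) in H by (field; lra).
    lra. }
  apply Rmult_le_compat_l with (r := h) in Hsum; [| lra].
  eapply Rle_trans; [exact Hsum | right; field; lra].
Qed.

Lemma shift_sum_linear_l (x y z : nat -> R) (c d : R) :
  shift_sum M (fun i => c * y i + d * z i) x = c * shift_sum M y x + d * shift_sum M z x.
Proof.
  unfold shift_sum.
  rewrite (sum_n_m_ext _ (fun i => c * (y i * x (i + 1)%nat) + d * (z i * x (i + 1)%nat)))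
    by (intros; simpl; ring).
  rewrite sum_n_m_Rplus, !sum_n_m_Rmult_l. reflexivity.
Qed.

Lemma shift_sum_linear_r (x y z : nat -> R) (c d : R) :
  shift_sum M x (fun i => c * y i + d * z i) = c * shift_sum M x y + d * shift_sum M x z.
Proof.
  unfold shift_sum.
  rewrite (sum_n_m_ext _ (fun i => c * (x i * y (i + 1)%nat) + d * (x i * z (i + 1)%nat)))
    by (intros; simpl; ring).
  rewrite sum_n_m_Rplus, !sum_n_m_Rmult_l. reflexivity.
Qed.

Lemma ax_form_comm (x y : nat -> R) : ax_form h M x y = ax_form h M y x.
Proof. unfold ax_form. rewrite ip_comm. ring. Qed.

Lemma ax_form_linear_l (x y z : nat -> R) (c d : R) :
  ax_form h M (fun i => c * y i + d * z i) x = c * ax_form h M y x + d * ax_form h M z x.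
Proof. unfold ax_form. rewrite ip_linear_l, shift_sum_linear_l, shift_sum_linear_r. ring. Qed.

Lemma ax_form_linear_r (x y z : nat -> R) (c d : R) :
  ax_form h M x (fun i => c * y i + d * z i) = c * ax_form h M x y + d * ax_form h M x z.
Proof. rewrite ax_form_comm, ax_form_linear_l, !(ax_form_comm x). reflexivity. Qed.

Lemma Ax_interior (w : nat -> R) (i : nat) : (1 <= i <= M - 1)%nat ->
  Ax M w i = (w (i - 1)%nat + 10 * w i + w (i + 1)%nat) / 12.
Proof.
  intros Hi. unfold Ax. replace (andb _ _) with true; [reflexivity |].
  symmetry. apply Bool.andb_true_iff. split; apply Nat.leb_le; lia.
Qed.

Lemma Ax_ext (w w' : nat -> R) (i : nat) : (forall j, w j = w' j) -> Ax M w i = Ax M w' i.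
Proof. intros H. unfold Ax. now rewrite !H. Qed.

Lemma Ax_scal (c : R) (w : nat -> R) (i : nat) : Ax M (fun j => c * w j) i = c * Ax M w i.
Proof. unfold Ax. destruct (andb _ _); field. Qed.

Lemma Ax_sum (c : nat -> R) (X : nat -> nat -> R) (n i : nat) :
  Ax M (fun j => sum_n (fun k => c k * X k j) n) i = sum_n (fun k => c k * Ax M (X k) i) n.
Proof.
  induction n as [| n IH].
  - rewrite sum_O. unfold Ax. destruct (andb _ _); rewrite !sum_O; field.
  - rewrite sum_Sn. change (@plus R_AbelianMonoid) with Rplus. rewrite <- IH.
    unfold Ax. destruct (andb _ _); rewrite !sum_Sn; change (@plus R_AbelianMonoid) with Rplus;
      field.
Qed.

Lemma ip_Ax (x y : nat -> R) : (1 <= M)%nat -> x 0%nat = 0 -> y M = 0 ->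
  ip h M (Ax M x) y = ax_form h M x y.
Proof.
  intros HM Hx0 HyM.
  (* reindex the x_{i-1} y_i terms; the boundary terms vanish *)
  assert (Hpred : sum_n_m (fun i => x (i - 1)%nat * y i) 1 (M - 1) = shift_sum M x y :> R).
  { pose proof (sum_n_m_shift_pred (fun j => x j * y (j + 1)%nat) (M - 1)) as H.
    cbv beta in H. replace (M - 1 + 1)%nat with M in H by lia. rewrite Hx0, HyM in H.
    unfold shift_sum. rewrite <- (sum_n_m_ext_loc_R (fun i => x (i - 1)%nat * y (i - 1 + 1)%nat)).
    - rewrite H. ring.
    - intros k Hk. now replace (k - 1 + 1)%nat with k by lia. }
  unfold ip, ax_form, ip, shift_sum at 2.
  rewrite (sum_n_m_ext_loc_R _ (fun i => / 12 * (x (i - 1)%nat * y i)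
             + (10 / 12 * (x i * y i) + / 12 * (y i * x (i + 1)%nat)))).
  - rewrite !sum_n_m_Rplus, !sum_n_m_Rmult_l, Hpred. field.
  - intros k Hk. rewrite Ax_interior by lia. field.
Qed.

Lemma ax_form_bounds (x : nat -> R) : 0 < h -> (1 <= M)%nat -> x M = 0 ->
  2 / 3 * nrm2 h M x <= ax_form h M x x /\ ax_form h M x x <= nrm2 h M x.
Proof.
  intros Hh HM HxM. unfold ax_form, nrm2, ip, shift_sum.
  set (Tm := sum_n_m (fun i => x i * x i) 1 (M - 1)).
  set (U := sum_n_m (fun i => x (i + 1)%nat * x (i + 1)%nat) 1 (M - 1)).
  (* since x_M = 0, the shifted squares sum to at most Tm *)
  assert (HU : U <= Tm).
  { pose proof (sum_n_m_shift_pred (fun j => x (j + 1)%nat * x (j + 1)%nat) (M - 1)) as H.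
    cbv beta in H. replace (M - 1 + 1)%nat with M in H by lia. rewrite HxM in H.
    rewrite (sum_n_m_ext_loc_R (fun i => x (i - 1 + 1)%nat * x (i - 1 + 1)%nat)
                               (fun i => x i * x i)) in H
      by (intros k Hk; now replace (k - 1 + 1)%nat with k by lia).
    fold Tm U in H. pose proof (Rle_0_sqr (x 1%nat)). unfold Rsqr in *. simpl in H. lra. }
  set (Sh := sum_n_m (fun i => x i * x (i + 1)%nat) 1 (M - 1)).
  assert (Hup : 2 * Sh <= Tm + U).
  { unfold Sh, Tm, U. rewrite <- sum_n_m_Rplus, <- sum_n_m_Rmult_l. apply sum_n_m_le.
    intros k. pose proof (Rle_0_sqr (x k - x (k + 1)%nat)). unfold Rsqr in *. nra. }
  assert (Hlow : - (2 * Sh) <= Tm + U).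
  { unfold Sh, Tm, U. rewrite <- sum_n_m_Rplus, <- sum_n_m_Rmult_l.
    rewrite <- (Rmult_1_l (sum_n_m _ 1 (M - 1))), Ropp_mult_distr_l, <- sum_n_m_Rmult_l.
    apply sum_n_m_le. intros k.
    pose proof (Rle_0_sqr (x k + x (k + 1)%nat)). unfold Rsqr in *. nra. }
  split; nra.
Qed.

Lemma ax_form_cauchy (x y : nat -> R) : 0 < h -> (1 <= M)%nat -> x M = 0 -> y M = 0 ->
  2 * ax_form h M x y <= ax_form h M x x + ax_form h M y y.
Proof.
  intros Hh HM HxM HyM.
  set (d := fun i => 1 * x i + (-1) * y i).
  destruct (ax_form_bounds d Hh HM) as [Hd _]; [unfold d; rewrite HxM, HyM; ring |].
  pose proof (nrm2_ge_0 d (Rlt_le _ _ Hh)).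
  unfold d at 2 3 in Hd. rewrite ax_form_linear_l, !ax_form_linear_r, (ax_form_comm y x) in Hd. lra.
Qed.

End GridFunctions.

(** * Energy estimate for the tempered scheme *)

Lemma tempered_scheme_exp_weight (al lambda tau h c : R) (M m i : nat) (v u : nat -> nat -> R)
  (f : R) :
  0 < tau -> (1 <= m)%nat ->
  (forall p j, u p j = exp (c + INR p * (lambda * tau)) * v p j) ->
  Ax M (fun j => dt al lambda tau v m j) i - At al (fun p j => d2x h (v p) j) m i = f ->
  Rpower tau (- al) * exp (al * (lambda * tau) / 2)
    * Ax M (fun j => sum_n (fun k => g al k * u (m - k)%nat j) m) i
  - d2x h (fun j => (1 - al / 2) * u m j + al / 2 * exp (lambda * tau) * u (m - 1)%nat j) i
  = exp (c + INR m * (lambda * tau)) * f.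
Proof.
  intros Htau Hm Hu Hscheme. set (mu := lambda * tau) in *.
  set (E := exp (c + INR m * mu)). assert (HE : 0 < E) by apply exp_pos.
  assert (Hdt : forall j, dt al lambda tau v m j
    = Rpower tau (- al) * (exp (al * mu / 2) * / E * sum_n (fun k => g al k * u (m - k)%nat j) m)).
  { intros j. unfold dt. f_equal. rewrite <- sum_n_Rmult_l.
    apply sum_n_m_ext_loc_R. intros k Hk. unfold gl. rewrite Hu, minus_INR by lia.
    replace (exp (- (INR k - al / 2) * lambda * tau))
      with (exp (al * mu / 2) * / E * exp (c + (INR m - INR k) * mu)).
    - ring.
    - unfold E. rewrite <- exp_Ropp, <- !exp_plus. f_equal. unfold mu. lra. }
  assert (Hshift : exp mu * exp (c + INR (m - 1) * mu) = E).
  { unfold E. rewrite <- exp_plus, minus_INR by lia. f_equal. simpl. lra. }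
  assert (HAt : E * At al (fun p j => d2x h (v p) j) m i
    = d2x h (fun j => (1 - al / 2) * u m j + al / 2 * exp mu * u (m - 1)%nat j) i).
  { unfold At, d2x. rewrite !Hu. fold E. rewrite <- Hshift. unfold Rdiv. ring. }
  rewrite (Ax_ext M (fun j => dt al lambda tau v m j) _ i Hdt), !Ax_scal in Hscheme.
  rewrite <- Hscheme, Rmult_minus_distr_l, HAt. field. lra.
Qed.

Lemma grunwald_scheme_energy (al kap a b C h : R) (M m : nat) (u : nat -> nat -> R) (F : nat -> R) :
  0 < al < 1 -> 0 < kap -> 0 <= a -> 0 <= b -> b <= al * a -> 0 < h -> 0 < C ->
  (1 <= M)%nat -> (1 <= m)%nat ->
  (forall p, (p <= m)%nat -> u p 0%nat = 0 /\ u p M = 0) ->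
  (forall w : nat -> R, w 0%nat = 0 -> w M = 0 -> - ip h M (d2x h w) w >= C * nrm2 h M w) ->
  (forall i, (1 <= i <= M - 1)%nat ->
     kap * Ax M (fun j => sum_n (fun k => g al k * u (m - k)%nat j) m) i
     - d2x h (fun j => a * u m j + b * u (m - 1)%nat j) i = F i) ->
  kap * ((a + b) / 2 * sum_n (fun k => g al k * ax_form h M (u (m - k)%nat) (u (m - k)%nat)) m)
  <= nrm2 h M F / (4 * C).
Proof.
  intros Hal Hkap Ha Hb Hba Hh HC HM Hm Hbd Hpoincare Hscheme.
  set (w := fun j => a * u m j + b * u (m - 1)%nat j).
  set (Q := fun j => sum_n (fun k => g al k * u (m - k)%nat j) m).
  assert (Hw : w 0%nat = 0 /\ w M = 0).
  { destruct (Hbd m) as [H0 H1], (Hbd (m - 1)%nat) as [H2 H3]; try lia.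
    unfold w. rewrite H0, H1, H2, H3. split; ring. }
  assert (Htest : kap * ip h M (Ax M Q) w + (-1) * ip h M (d2x h w) w = ip h M F w).
  { rewrite <- ip_linear_l. apply ip_ext; [| auto].
    intros i Hi. rewrite <- Hscheme by exact Hi. fold Q w. ring. }
  assert (HQ : ip h M (Ax M Q) w
    = sum_n (fun k => g al k * (a * ax_form h M (u (m - k)%nat) (u m)
                                 + b * ax_form h M (u (m - k)%nat) (u (m - 1)%nat))) m).
  { rewrite (ip_ext h M _ (fun i => sum_n (fun k => g al k * Ax M (u (m - k)%nat) i) m) w w).
    - rewrite (ip_sum_l h M (g al) (fun k i => Ax M (u (m - k)%nat) i)).
      unfold sum_n. apply sum_n_m_ext_loc_R. intros k Hk. unfold w.
      rewrite ip_linear_r, !ip_Ax; try reflexivity; try lia; apply Hbd; lia.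
    - intros i _. apply Ax_sum.
    - auto. }
  assert (Henergy : (a + b) / 2
      * sum_n (fun k => g al k * ax_form h M (u (m - k)%nat) (u (m - k)%nat)) m
    <= ip h M (Ax M Q) w).
  { rewrite HQ.
    apply (convolution_energy_ineq al a b (g al) (fun p q => ax_form h M (u p) (u q))); auto.
    - apply Hal.
    - apply g_0.
    - apply g_1.
    - now apply g_le_0.
    - apply Rlt_le, gsum_gt_0, Hal.
    - intros; apply ax_form_comm.
    - intros p q Hp Hq. apply ax_form_cauchy; auto; apply Hbd; auto.
    - intros p Hp. destruct (ax_form_bounds h M (u p) Hh HM) as [Hlow _]; [apply Hbd; auto |].
      pose proof (nrm2_ge_0 h M (u p) (Rlt_le _ _ Hh)). lra. }
  pose proof (Hpoincare w (proj1 Hw) (proj2 Hw)).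
  pose proof (ip_le_young h M C F w Hh HC).
  apply Rmult_le_compat_l with (r := kap) in Henergy; lra.
Qed.

Lemma energy_constant_bound (al mu tau gam C : R) (n : nat) :
  0 < al < 1 -> 0 < tau -> 0 < C -> (2 - al) / 2 <= gam -> (1 <= n)%nat ->
  exp (2 * (INR n - 1) * Rabs mu) / (4 * C)
    / (Rpower tau (- al) * exp (al * mu / 2) * (gam / 2) * gsum al n)
  <= 2 * Gamma (1 - al) * Rpower (INR n * tau) al * exp (2 * INR n * Rabs mu) / C.
Proof.
  intros Hal Htau HC Hgam Hn.
  pose proof (Rpower_div_gsum_le al Hal tau n Htau Hn) as Hdiv.
  pose proof (Gamma_lower_bound (1 - al) ltac:(lra)) as HGamma.
  replace (1 - al + 1) with (2 - al) in HGamma by ring.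
  pose proof (gsum_gt_0 al Hal n). pose proof (Rpower_gt_0 tau al).
  pose proof (Rpower_gt_0 (INR n * tau) al).
  assert (Hexp : exp (2 * (INR n - 1) * Rabs mu) * exp (- (al * mu / 2))
                 <= exp (2 * INR n * Rabs mu)).
  { rewrite <- exp_plus. apply exp_le_compat.
    pose proof (Rle_abs (- mu)). rewrite Rabs_Ropp in *. pose proof (Rabs_pos mu). nra. }
  set (E := exp (2 * (INR n - 1) * Rabs mu) * exp (- (al * mu / 2))) in Hexp.
  assert (HE : 0 < E) by (apply Rmult_lt_0_compat; apply exp_pos).
  replace (exp (2 * (INR n - 1) * Rabs mu) / (4 * C)
            / (Rpower tau (- al) * exp (al * mu / 2) * (gam / 2) * gsum al n))
    with (E / C * (Rpower tau al / gsum al n) * / (2 * gam)).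
  2: { unfold E. rewrite Rpower_Ropp, exp_Ropp. pose proof (exp_pos (al * mu / 2)). field.
       repeat split; lra. }
  apply Rle_trans with (exp (2 * INR n * Rabs mu) / C * (Rpower (INR n * tau) al / (1 - al))
                        * / (2 - al)).
  - apply Rmult_le_compat.
    + apply Rmult_le_pos; apply Rlt_le; [apply Rdiv_lt_0_compat | apply Rdiv_lt_0_compat]; lra.
    + apply Rlt_le, Rinv_0_lt_compat. lra.
    + apply Rmult_le_compat;
        [apply Rlt_le, Rdiv_lt_0_compat; lra | apply Rlt_le, Rdiv_lt_0_compat; lra |
        apply Rmult_le_compat_r; [apply Rlt_le, Rinv_0_lt_compat; lra | exact Hexp] | exact Hdiv].
    + apply Rinv_le_contravar; lra.
  - set (K := Rpower (INR n * tau) al * exp (2 * INR n * Rabs mu) / C).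
    assert (HK : 0 < K).
    { apply Rdiv_lt_0_compat; [apply Rmult_lt_0_compat; [| apply exp_pos] |]; lra. }
    replace (exp (2 * INR n * Rabs mu) / C * (Rpower (INR n * tau) al / (1 - al)) * / (2 - al))
      with (2 * (1 / (2 * (1 - al) * (2 - al))) * K) by (unfold K; field; lra).
    replace (2 * Gamma (1 - al) * Rpower (INR n * tau) al * exp (2 * INR n * Rabs mu) / C)
      with (2 * Gamma (1 - al) * K) by (unfold K; field; lra).
    apply Rmult_le_compat_r; lra.
Qed.

Lemma tempered_scheme_energy_step (al lambda tau h C c : R) (M m : nat) (v u : nat -> nat -> R)
  (f : nat -> R) :
  0 < al < 1 -> 0 < tau -> 0 < h -> 0 < C -> (1 <= M)%nat -> (1 <= m)%nat ->
  exp (lambda * tau) <= 2 - al ->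
  (forall w : nat -> R, w 0%nat = 0 -> w M = 0 -> - ip h M (d2x h w) w >= C * nrm2 h M w) ->
  (forall p j, u p j = exp (c + INR p * (lambda * tau)) * v p j) ->
  (forall p, (p <= m)%nat -> u p 0%nat = 0 /\ u p M = 0) ->
  (forall i, (1 <= i <= M - 1)%nat ->
     Ax M (fun j => dt al lambda tau v m j) i - At al (fun p j => d2x h (v p) j) m i = f i) ->
  Rpower tau (- al) * exp (al * (lambda * tau) / 2)
    * ((1 - al / 2 + al / 2 * exp (lambda * tau)) / 2)
    * sum_n (fun k => g al k * ax_form h M (u (m - k)%nat) (u (m - k)%nat)) m
  <= exp (2 * (c + INR m * (lambda * tau))) * nrm2 h M f / (4 * C).
Proof.
  intros Hal Htau Hh HC HM Hm Hcond Hpoincare Hu Hbd Hscheme.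
  pose proof (exp_pos (lambda * tau)).
  rewrite Rmult_assoc. eapply Rle_trans.
  - apply (grunwald_scheme_energy al _ (1 - al / 2) (al / 2 * exp (lambda * tau)) C h M m u
             (fun i => exp (c + INR m * (lambda * tau)) * f i)); try assumption; try lra.
    + apply Rmult_lt_0_compat; [apply Rpower_gt_0 | apply exp_pos].
    + nra.
    + nra.
    + intros i Hi. apply (tempered_scheme_exp_weight al lambda tau h c M m i v u); auto.
  - rewrite nrm2_scal, <- exp_plus. right. do 3 f_equal. ring.
Qed.

Lemma tempered_scheme_energy_estimate (al lambda tau h C Smax : R) (M N n : nat)
  (F v : nat -> nat -> R) :
  0 < al < 1 -> 0 < tau -> 0 < h -> 0 < C -> (1 <= M)%nat -> (1 <= n <= N)%nat ->
  exp (lambda * tau) <= 2 - al ->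
  (forall w : nat -> R, w 0%nat = 0 -> w M = 0 -> - ip h M (d2x h w) w >= C * nrm2 h M w) ->
  (forall p, (p <= N)%nat -> v p 0%nat = 0 /\ v p M = 0) ->
  (forall m i, (1 <= i <= M - 1)%nat -> (1 <= m <= N)%nat ->
     Ax M (fun j => dt al lambda tau v m j) i - At al (fun p j => d2x h (v p) j) m i = F m i) ->
  (forall m, (1 <= m <= N)%nat -> nrm2 h M (F m) <= Smax) ->
  nrm2 h M (v n)
  <= 3 / 2 * exp (2 * INR n * Rabs (lambda * tau)) * nrm2 h M (v 0%nat)
     + 3 * Gamma (1 - al) * Rpower (INR n * tau) al * exp (2 * INR n * Rabs (lambda * tau)) / C
       * Smax.
Proof.
  intros Hal Htau Hh HC HM Hn Hcond Hpoincare Hbd Hscheme HS.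
  set (mu := lambda * tau) in *.
  (* normalizing the weight at step n gives u^n = v^n, and all weights are <= e^{2 n |mu|} *)
  set (u := fun p j => exp (- (INR n * mu) + INR p * mu) * v p j).
  assert (Hubd : forall p, (p <= n)%nat -> u p 0%nat = 0 /\ u p M = 0).
  { intros p Hp. unfold u. destruct (Hbd p) as [H0 H1]; [lia |]. rewrite H0, H1. split; ring. }
  set (kap := Rpower tau (- al) * exp (al * mu / 2)).
  set (gam := 1 - al / 2 + al / 2 * exp mu).
  set (y := fun p => ax_form h M (u p) (u p)).
  set (B := Smax * (exp (2 * (INR n - 1) * Rabs mu) / (4 * C))).
  assert (HSmax : 0 <= Smax).
  { eapply Rle_trans; [apply (nrm2_ge_0 h M (F 1%nat)); lra | apply HS; lia]. }
  assert (Hstep : forall m, (1 <= m <= n)%nat ->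
    kap * (gam / 2) * sum_n (fun k => g al k * y (m - k)%nat) m <= B).
  { intros m Hm. eapply Rle_trans.
    - apply (tempered_scheme_energy_step al lambda tau h C (- (INR n * mu)) M m v u (F m));
        auto; try lia.
      + intros p Hp. apply Hubd. lia.
      + intros i Hi. apply Hscheme; lia.
    - fold mu. assert (exp (2 * (- (INR n * mu) + INR m * mu)) <= exp (2 * (INR n - 1) * Rabs mu)).
      { apply exp_le_compat. pose proof (le_INR m n ltac:(lia)).
        assert (1 <= INR m) by (apply (le_INR 1); lia).
        pose proof (Rle_abs mu). pose proof (Rle_abs (- mu)). rewrite Rabs_Ropp in *. nra. }
      pose proof (HS m ltac:(lia)). pose proof (nrm2_ge_0 h M (F m) (Rlt_le _ _ Hh)).
      apply Rle_trans with (exp (2 * (INR n - 1) * Rabs mu) * Smax / (4 * C)).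
      + unfold Rdiv. apply Rmult_le_compat_r; [apply Rlt_le, Rinv_0_lt_compat; lra |].
        apply Rmult_le_compat; [apply Rlt_le, exp_pos | lra | lra | lra].
      + unfold B. right. field. lra. }
  assert (Hun : nrm2 h M (u n) = nrm2 h M (v n)).
  { unfold u. rewrite nrm2_scal. replace (- (INR n * mu) + INR n * mu) with 0 by ring.
    rewrite exp_0. ring. }
  assert (Hu0 : nrm2 h M (u 0%nat) = exp (- (2 * INR n * mu)) * nrm2 h M (v 0%nat)).
  { unfold u. rewrite nrm2_scal. simpl INR. rewrite <- exp_plus. f_equal. f_equal. ring. }
  destruct (ax_form_bounds h M (u n) Hh HM) as [Hyn _]; [apply Hubd; lia |].
  destruct (ax_form_bounds h M (u 0%nat) Hh HM) as [Hy0' Hy0]; [apply Hubd; lia |].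
  fold (y n) in Hyn. fold (y 0%nat) in Hy0, Hy0'. rewrite Hun in Hyn. rewrite Hu0 in Hy0.
  pose proof (nrm2_ge_0 h M (u 0%nat) (Rlt_le _ _ Hh)).
  pose proof (nrm2_ge_0 h M (v 0%nat) (Rlt_le _ _ Hh)).
  assert (Hgam : (2 - al) / 2 <= gam) by (unfold gam; pose proof (exp_pos mu); nra).
  assert (Hc : 0 < kap * (gam / 2)).
  { apply Rmult_lt_0_compat; [apply Rmult_lt_0_compat; [apply Rpower_gt_0 | apply exp_pos] | lra]. }
  assert (HB : 0 <= B).
  { apply Rmult_le_pos; [exact HSmax |]. apply Rlt_le, Rdiv_lt_0_compat; [apply exp_pos | lra]. }
  pose proof (gsum_convolution_bound al Hal (kap * (gam / 2)) B y n Hc HB ltac:(lra) Hstep) as Hrec.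
  replace (B / (kap * (gam / 2) * gsum al n))
    with (Smax * (exp (2 * (INR n - 1) * Rabs mu) / (4 * C) / (kap * (gam / 2) * gsum al n)))
    in Hrec
    by (unfold B, Rdiv; ring).
  pose proof (energy_constant_bound al mu tau gam C n Hal Htau HC Hgam ltac:(lia)) as Hconst.
  fold kap in Hconst. apply Rmult_le_compat_l with (r := Smax) in Hconst; [| exact HSmax].
  assert (Hexp : exp (- (2 * INR n * mu)) <= exp (2 * INR n * Rabs mu)).
  { apply exp_le_compat. pose proof (Rle_abs (- mu)). rewrite Rabs_Ropp in *.
    pose proof (pos_INR n). nra. }
  apply Rmult_le_compat_r with (r := nrm2 h M (v 0%nat)) in Hexp; [| assumption].
  nra.
Qed.

Lemma stability_bound_le_horizon (al lambda tau T C x Smax : R) (n : nat) :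
  0 < al < 1 -> 0 < tau -> 0 < C -> 0 <= x -> 0 <= Smax -> (1 <= n)%nat -> INR n * tau <= T ->
  3 / 2 * exp (2 * INR n * Rabs (lambda * tau)) * x
    + 3 * Gamma (1 - al) * Rpower (INR n * tau) al * exp (2 * INR n * Rabs (lambda * tau)) / C
      * Smax
  <= 3 / 2 * exp (2 * Rabs lambda * T) * x
     + 3 * Gamma (1 - al) * Rpower T al * exp (2 * Rabs lambda * T) / C * Smax.
Proof.
  intros Hal Htau HC Hx HSmax Hn HnT.
  assert (Hnt : 0 < INR n * tau) by (apply Rmult_lt_0_compat; [apply lt_0_INR; lia | exact Htau]).
  assert (Hexp : exp (2 * INR n * Rabs (lambda * tau)) <= exp (2 * Rabs lambda * T)).
  { apply exp_le_compat. rewrite Rabs_mult, (Rabs_right tau) by lra.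
    pose proof (Rabs_pos lambda). nra. }
  assert (HGamma : 0 <= Gamma (1 - al)).
  { eapply Rle_trans; [| apply Gamma_lower_bound; lra].
    apply Rlt_le, Rdiv_lt_0_compat; [lra |]. apply Rmult_lt_0_compat; lra. }
  pose proof (Rle_Rpower_l (INR n * tau) T al ltac:(lra) ltac:(lra)).
  pose proof (Rpower_gt_0 (INR n * tau) al). pose proof (exp_pos (2 * INR n * Rabs (lambda * tau))).
  apply Rplus_le_compat.
  - apply Rmult_le_compat_r; [lra |]. apply Rmult_le_compat_l; lra.
  - unfold Rdiv. apply Rmult_le_compat_r; [exact HSmax |].
    apply Rmult_le_compat_r; [apply Rlt_le, Rinv_0_lt_compat; lra |].
    apply Rmult_le_compat; [| lra | | exact Hexp].
    + apply Rmult_le_pos; [| lra]. apply Rmult_le_pos; lra.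
    + apply Rmult_le_compat_l; [lra | assumption].
Qed.

Theorem theorem4p1
  (alpha lambda T a b C : R) (N M : nat)
  (v0 : R -> R) (S : nat -> nat -> R) (v : nat -> nat -> R)
  (Halpha : 0 < alpha < 1) (HT : 0 < T) (Hab : a < b)
  (HN : (2 <= N)%nat) (HM : (2 <= M)%nat)
  (* C = C_Omega > 0, depending only on Omega = (a,b): the discrete Poincare
     inequality -(delta_x^2 w, w) >= C ||w||^2 for every uniform mesh of (a,b) *)
  (HC : 0 < C)
  (HCOmega : forall (M' : nat) (w : nat -> R), (1 <= M')%nat ->
      w O = 0 -> w M' = 0 ->
      - ip ((b - a) / INR M') M' (d2x ((b - a) / INR M') w) w
        >= C * nrm2 ((b - a) / INR M') M' w)
  (Hv0a : v0 a = 0) (Hv0b : v0 b = 0)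
  (Hscheme : forall n i, (1 <= i <= M - 1)%nat -> (1 <= n <= N)%nat ->
      Ax M (fun j => dt alpha lambda (T / INR N) v n j) i
      - At alpha (fun m j => d2x ((b - a) / INR M) (v m) j) n i = S n i)
  (Hbc0 : forall n, (1 <= n <= N)%nat -> v n O = 0)
  (HbcM : forall n, (1 <= n <= N)%nat -> v n M = 0)
  (Hinit : forall i, (i <= M)%nat -> v O i = v0 (a + INR i * ((b - a) / INR M)))
  (Hcond : 2 - alpha - exp (lambda * (T / INR N)) >= 0) :
  forall n : nat, (1 < n <= N)%nat ->
    nrm (((b - a) / INR M)) M (v n) ^ 2
    <= 3 / 2 * exp (2 * Rabs lambda * T) * nrm ((b - a) / INR M) M (v O) ^ 2
       + 3 * Gamma (1 - alpha) * Rpower T alpha * exp (2 * Rabs lambda * T) / C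
         * maxn0 (fun m => nrm ((b - a) / INR M) M (S m) ^ 2) N.
Proof.
  intros n Hn.
  set (h := (b - a) / INR M) in *. set (tau := T / INR N) in *.
  assert (HMpos : 0 < INR M) by (apply lt_0_INR; lia).
  assert (HNpos : 0 < INR N) by (apply lt_0_INR; lia).
  assert (Hh : 0 < h) by (apply Rdiv_lt_0_compat; lra).
  assert (Htau : 0 < tau) by (apply Rdiv_lt_0_compat; lra).
  assert (Hnrm : forall w, nrm h M w ^ 2 = nrm2 h M w)
    by (intros w; apply pow2_sqrt, nrm2_ge_0; lra).
  assert (Hbd : forall p, (p <= N)%nat -> v p 0%nat = 0 /\ v p M = 0).
  { intros [| p] Hp; [| split; [apply Hbc0 | apply HbcM]; lia].
    rewrite !Hinit by lia. simpl INR. rewrite Rmult_0_l, Rplus_0_r.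
    replace (a + INR M * h) with b by (unfold h; field; lra). auto. }
  set (Smax := maxn0 (fun m => nrm h M (S m) ^ 2) N).
  rewrite !Hnrm. eapply Rle_trans.
  - apply (tempered_scheme_energy_estimate alpha lambda tau h C Smax M N n S v);
      try assumption; try lia; try lra.
    + intros w; apply HCOmega; lia.
    + intros m Hm. rewrite <- Hnrm. apply (maxn0_ge (fun m => nrm h M (S m) ^ 2)). lia.
  - apply stability_bound_le_horizon; try lra; try lia.
    + apply nrm2_ge_0. lra.
    + eapply Rle_trans; [| apply (maxn0_ge (fun m => nrm h M (S m) ^ 2) N 0); lia]. apply pow2_ge_0.
    + apply Rmult_le_reg_r with (INR N); [lra |].
      replace (INR n * tau * INR N) with (T * INR n) by (unfold tau; field; lra).
      apply Rmult_le_compat_l; [lra | apply le_INR; lia].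
Qed.
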